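(* For every target rate $r>0$, relay power $P_{\rm r}>0$ and $\mathcal C_x\in[0,1)$, the outage probability of the S–R link is \[ \mathcal P_{\rm sr}(P_{\rm r},\mathcal C_x)=1-\frac{1}{\Gamma(m_{\rm rr})\Gamma(m_{\rm sr})\theta_{\rm rr}^{m_{\rm rr}}}\int_0^\infty x^{m_{\rm rr}-1}\,\Gamma\!\left(m_{\rm sr},\frac{P_{\rm r}x+1}{P_{\rm s}\theta_{\rm sr}}\Psi_r\!\left(\frac{P_{\rm r}x\,\mathcal C_x}{P_{\rm r}x+1}\right)\right)e^{-x/\theta_{\rm rr}}\,dx . \]
   Context: Let $P_{\rm s}>0$, $P_{\rm r}>0$ be the source and relay transmit powers. For links $ij\in\{\mathrm{sr},\mathrm{rr},\mathrm{rd},\mathrm{sd}\}$ let $g_{ij}$ be mutually independent random channel gains, $g_{ij}$ gamma distributed with integer shape parameter $m_{ij}\ge1$ and scale $\theta_{ij}=\pi_{ij}/m_{ij}$, where $\pi_{ij}=\mathbb E[g_{ij}]>0$; i.e. $g_{ij}$ has density $x^{m_{ij}-1}e^{-x/\theta_{ij}}/(\Gamma(m_{ij})\theta_{ij}^{m_{ij}})$ for $x\ge0$. For a circularity coefficient $\mathcal C_x\in[0,1)$ define $R_{\rm sr}(P_{\rm r},\mathcal C_x)=\tfrac12\log_2\frac{(P_{\rm s}g_{\rm sr}+P_{\rm r}g_{\rm rr}+1)^2-(P_{\rm r}g_{\rm rr}\mathcal C_x)^2}{(P_{\rm r}g_{\rm rr}+1)^2-(P_{\rm r}g_{\rm rr}\mathcal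 C_x)^2}$ and $R_{\rm rd}(P_{\rm r},\mathcal C_x)=\tfrac12\log_2\frac{(P_{\rm r}g_{\rm rd}+P_{\rm s}g_{\rm sd}+1)^2-(P_{\rm r}g_{\rm rd}\mathcal C_x)^2}{(P_{\rm s}g_{\rm sd}+1)^2}$. For a target rate $r>0$ put $\gamma=2^{2r}-1$, $\eta=2^r-1$ and $\Psi_r(x)=\sqrt{1+\gamma(1-x^2)}-1$. The outage probabilities are $\mathcal P_{\rm sr}=\mathbb P\{R_{\rm sr}<r\}$, $\mathcal P_{\rm rd}=\mathbb P\{R_{\rm rd}<r\}$ and $\mathcal P_{\rm E-E}=\mathbb P\{\min(R_{\rm sr},R_{\rm rd})<r\}$. $\Gamma(a,x)=\int_x^\infty t^{a-1}e^{-t}dt$ is the upper incomplete gamma function. *)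

From Stdlib Require Import Reals Lra ClassicalEpsilon.
Open Scope R_scope.

Definition improper_int_to (f : R -> R) (a l : R) : Prop :=
  (forall b, a <= b -> inhabited (Riemann_integrable f a b)) /\
  (forall eps, 0 < eps -> exists M, forall b (pr : Riemann_integrable f a b),
      M <= b -> Rabs (RiemannInt pr - l) < eps).

(* The value of \int_a^oo f (chosen by classical choice; meaningful when it
   converges). *)
Definition Iint (f : R -> R) (a : R) : R :=
  epsilon (inhabits 0) (fun l => improper_int_to f a l).

Definition inc_gamma (s : nat) (x : R) : R :=
  Iint (fun t => t ^ (s - 1) * exp (- t)) x.

Definition Gamma (s : nat) : R := inc_gamma s 0.

Definition gamma_pdf (m : nat) (theta x : R) : R :=
  if Rle_dec 0 x then x ^ (m - 1) * exp (- x / theta) / (Gamma m * theta ^ m)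
  else 0.

Definition log2 (z : R) : R := ln z / ln 2.

Definition R_sr (Ps Pr Cx gsr grr : R) : R :=
  / 2 * log2 (((Ps * gsr + Pr * grr + 1) ^ 2 - (Pr * grr * Cx) ^ 2) /
              ((Pr * grr + 1) ^ 2 - (Pr * grr * Cx) ^ 2)).


(* P_sr = P{ R_sr < r } for independent g_sr ~ Gamma(msr, thsr),
   g_rr ~ Gamma(mrr, thrr): integral of the (product) joint density over
   the event, written as an iterated integral over [0,oo)^2. *)
Definition P_sr (Ps Pr Cx r : R) (msr mrr : nat) (thsr thrr : R) : R :=
  Iint (fun x => gamma_pdf mrr thrr x *
         Iint (fun y => gamma_pdf msr thsr y *
                 (if Rlt_dec (R_sr Ps Pr Cx y x) r then 1 else 0)) 0) 0.

Definition gamma_r (r : R) : R := Rpower 2 (2 * r) - 1.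
Definition eta_r (r : R) : R := Rpower 2 r - 1.
Definition Psi (r x : R) : R := sqrt (1 + gamma_r r * (1 - x ^ 2)) - 1.

From Stdlib Require Import Reals Lra Lia Factorial ClassicalEpsilon Classical.
From Coquelicot Require Import Coquelicot.
Open Scope R_scope.

(* Given g_rr = x, the event R_sr < r is the interval g_sr < T(x), with
   T(x) = (P_r x + 1) Psi_r(P_r x C_x / (P_r x + 1)) / P_s: using 2^(2r) = 1 + gamma it is a
   quadratic inequality in P_s g_sr. For an integer shape the incomplete gamma function is
   explicit, Gamma(k+1, u) = k! e^(-u) sum_(j <= k) u^j / j!, so the inner integral of P_sr is
   1 - Gamma(m_sr, T(x) / theta_sr) / Gamma(m_sr). The outer integral of the density of g_rr
   against this tail converges, its integrand being nonnegative and dominated by that density,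
   and both sides of the identity are affine in its value. *)

Lemma improper_int_to_is_lim (f : R -> R) (a l : R) :
  improper_int_to f a l -> is_lim (fun b => RInt f a b) p_infty l.
Proof.
intros [Hint Hlim]. apply is_lim_spec. intros eps.
destruct (Hlim eps (cond_pos eps)) as [M HM]. exists (Rmax a M). intros b Hb.
pose proof (Rmax_l a M). pose proof (Rmax_r a M).
destruct (Hint b ltac:(lra)) as [pr]. rewrite (RInt_Reals f a b pr). apply HM. lra.
Qed.

Lemma is_lim_improper_int_to (f : R -> R) (a l : R) :
  (forall b, a <= b -> ex_RInt f a b) -> is_lim (fun b => RInt f a b) p_infty l ->
  improper_int_to f a l.
Proof.
intros Hint Hlim. split.
- intros b Hb. constructor. now apply ex_RInt_Reals_0, Hint.
- intros eps Heps. apply is_lim_spec in Hlim.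
  destruct (Hlim (mkposreal eps Heps)) as [M HM]; simpl in HM.
  exists (M + 1). intros b pr Hb. rewrite <- RInt_Reals. apply HM. lra.
Qed.

Lemma Iint_eq_lim (f : R -> R) (a l : R) :
  (forall b, a <= b -> ex_RInt f a b) -> is_lim (fun b => RInt f a b) p_infty l ->
  Iint f a = l.
Proof.
intros Hint Hlim.
assert (Hl : improper_int_to f a (Iint f a)).
{ unfold Iint. apply epsilon_spec. exists l. now apply is_lim_improper_int_to. }
apply improper_int_to_is_lim, is_lim_unique in Hl. apply is_lim_unique in Hlim.
rewrite Hlim in Hl. now injection Hl.
Qed.

Lemma monotone_bounded_is_lim (F : R -> R) (a B : R) :
  (forall u v, a <= u <= v -> F u <= F v) -> (forall u, a <= u -> F u <= B) ->
  exists L : R, is_lim F p_infty L.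
Proof.
intros Hmono Hbnd.
set (E := fun v => exists u, a <= u /\ v = F u).
destruct (completeness E) as [L [Hub Hlub]].
- exists B. intros v [u [Hu ->]]. now apply Hbnd.
- exists (F a), a. split; [lra | reflexivity].
- exists L. apply is_lim_spec. intros eps.
  assert (Hu0 : exists u0, a <= u0 /\ L - eps < F u0).
  { apply NNPP. intros Hno. assert (L <= L - eps); [| destruct eps; simpl in *; lra].
    apply Hlub. intros v [u [Hu ->]]. apply Rnot_lt_le. intros Hlt. apply Hno. now exists u. }
  destruct Hu0 as [u0 [Hu0 Hlt]]. exists u0. intros u Hu.
  assert (F u0 <= F u) by (apply Hmono; lra).
  assert (F u <= L) by (apply Hub; exists u; split; [lra | reflexivity]).
  rewrite Rabs_left1; lra.
Qed.

Lemma is_lim_p_infty_scale (f : R -> R) (l th : R) : 0 < th ->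
  is_lim f p_infty l -> is_lim (fun b => f (b / th)) p_infty l.
Proof.
intros Hth Hf. apply is_lim_spec. intros eps.
pose proof (proj2 (is_lim_spec _ _ _) Hf eps) as [M HM].
exists (M * th). intros b Hb. apply HM.
apply (Rmult_lt_reg_r th); [exact Hth |].
unfold Rdiv. rewrite Rmult_assoc, Rinv_l, Rmult_1_r by lra. exact Hb.
Qed.

Definition exp_taylor (k : nat) (u : R) : R := sum_f_R0 (fun j => u ^ j / INR (fact j)) k.

(* [erlang_tail k u = Gamma(k+1, u) / k!], the tail of the Erlang distribution of shape [k+1]. *)
Definition erlang_tail (k : nat) (u : R) : R := exp (- u) * exp_taylor k u.

Lemma INR_fact_pos k : 0 < INR (fact k).
Proof. apply lt_0_INR, lt_O_fact. Qed.

Lemma exp_taylor_nonneg k u : 0 <= u -> 0 <= exp_taylor k u.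
Proof.
intros Hu. apply cond_pos_sum. intros j.
apply Rdiv_le_0_compat; [apply pow_le, Hu | apply INR_fact_pos].
Qed.

Lemma exp_taylor_0 k : exp_taylor k 0 = 1.
Proof.
induction k as [|k IHk]; unfold exp_taylor in *; simpl sum_f_R0.
- simpl. field.
- rewrite IHk. unfold Rdiv. ring.
Qed.

Lemma is_derive_exp_taylor k u :
  is_derive (exp_taylor k) u (exp_taylor k u - u ^ k / INR (fact k)).
Proof.
induction k as [|k IHk].
- apply (is_derive_ext (fun _ => 1)); [intros; unfold exp_taylor; simpl; field |].
  unfold exp_taylor; simpl. replace (1 / 1 - 1 / 1) with 0 by field. auto_derive; reflexivity.
- pose proof (INR_fact_pos k) as Hk.
  apply (is_derive_ext (fun u => exp_taylor k u + u ^ S k / INR (fact (S k)))); [reflexivity |].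
  replace (exp_taylor (S k) u - u ^ S k / INR (fact (S k))) with
    ((exp_taylor k u - u ^ k / INR (fact k)) + u ^ k / INR (fact k))
    by (unfold exp_taylor; simpl; ring).
  apply (is_derive_plus _ _ _ _ _ IHk). rewrite fact_simpl, mult_INR, S_INR.
  pose proof (pos_INR k). auto_derive; [exact I |].
  change (match k with 0%nat => 1 | S _ => INR k + 1 end) with (INR (S k)).
  rewrite S_INR. field. lra.
Qed.

Lemma is_derive_erlang_tail k u :
  is_derive (erlang_tail k) u (- (exp (- u) * (u ^ k / INR (fact k)))).
Proof.
unfold erlang_tail. auto_derive; [eexists; apply is_derive_exp_taylor |].
change (fun x => exp_taylor k x) with (exp_taylor k).
rewrite (is_derive_unique _ _ _ (is_derive_exp_taylor k u)). ring.
Qed.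

Lemma erlang_tail_0 k : erlang_tail k 0 = 1.
Proof. unfold erlang_tail. rewrite exp_taylor_0, Ropp_0, exp_0. ring. Qed.

Lemma erlang_tail_bounds k u : 0 <= u -> 0 <= erlang_tail k u <= 1.
Proof.
intros Hu. pose proof (exp_pos (- u)). pose proof (exp_taylor_nonneg k u Hu).
unfold erlang_tail. split; [nra |].
replace 1 with (exp (- u) * exp u) by (rewrite <- exp_plus, Rplus_opp_l; apply exp_0).
apply Rmult_le_compat_l; [lra | apply exp_ge_taylor, Hu].
Qed.

(* Since [exp u >= u ^ (S k) / (S k)!], the [k]-th term is at most [(S k) / u]. *)
Lemma is_lim_exp_taylor_term k :
  is_lim (fun u => exp (- u) * (u ^ k / INR (fact k))) p_infty 0.
Proof.
apply (is_lim_le_le_loc (fun _ => 0) (fun u => INR (S k) * / u)).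
- exists 0. intros u Hu. pose proof (INR_fact_pos k). pose proof (exp_pos u).
  pose proof (pow_lt u k Hu). assert (HSk : 0 < INR (S k)) by (apply lt_0_INR; lia).
  assert (Hexp : u ^ S k / INR (fact (S k)) <= exp u).
  { pose proof (exp_ge_taylor u (S k) (Rlt_le _ _ Hu)) as Htaylor. rewrite tech5 in Htaylor.
    pose proof (exp_taylor_nonneg k u (Rlt_le _ _ Hu)). unfold exp_taylor in *. lra. }
  rewrite fact_simpl, mult_INR in Hexp. simpl pow in Hexp. rewrite exp_Ropp. split.
  + apply Rmult_le_pos; [left; apply Rinv_0_lt_compat, exp_pos |].
    apply Rdiv_le_0_compat; lra.
  + apply (Rmult_le_reg_r (u * exp u)); [nra |].
    replace (/ exp u * (u ^ k / INR (fact k)) * (u * exp u))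
      with (INR (S k) * (u * u ^ k / (INR (S k) * INR (fact k)))) by (field; repeat split; lra).
    replace (INR (S k) * / u * (u * exp u)) with (INR (S k) * exp u) by (field; lra).
    apply Rmult_le_compat_l; [apply pos_INR | exact Hexp].
- apply is_lim_const.
- replace (Finite 0) with (Rbar_mult (INR (S k)) (Rbar_inv p_infty)) by (simpl; f_equal; ring).
  apply is_lim_scal_l, is_lim_inv; [apply is_lim_id | discriminate].
Qed.

Lemma is_lim_erlang_tail k : is_lim (erlang_tail k) p_infty 0.
Proof.
induction k as [|k IHk].
- apply (is_lim_ext (fun u => exp (- u) * (u ^ 0 / INR (fact 0)))).
  { intros u; unfold erlang_tail, exp_taylor; reflexivity. }
  apply is_lim_exp_taylor_term.
- apply (is_lim_ext (fun u => erlang_tail k u + exp (- u) * (u ^ S k / INR (fact (S k))))).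
  { intros u; unfold erlang_tail, exp_taylor. rewrite tech5. ring. }
  replace (Finite 0) with (Finite (0 + 0)) by (f_equal; ring).
  apply is_lim_plus'; [exact IHk | apply is_lim_exp_taylor_term].
Qed.

Lemma is_RInt_erlang_tail k a b :
  is_RInt (fun t => exp (- t) * (t ^ k / INR (fact k))) a b (erlang_tail k a - erlang_tail k b).
Proof.
replace (erlang_tail k a - erlang_tail k b)
  with (minus (opp (erlang_tail k b)) (opp (erlang_tail k a)))
  by (unfold minus, opp, plus; simpl; ring).
apply (is_RInt_derive (fun t => opp (erlang_tail k t))).
- intros t _. unfold opp; simpl.
  auto_derive; [eexists; apply is_derive_erlang_tail |].
  change (fun x => erlang_tail k x) with (erlang_tail k).
  rewrite (is_derive_unique _ _ _ (is_derive_erlang_tail k t)). ring.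
- intros t _. apply (@ex_derive_continuous R_AbsRing R_NormedModule). auto_derive. exact I.
Qed.

Lemma inc_gamma_S k u : inc_gamma (S k) u = INR (fact k) * erlang_tail k u.
Proof.
unfold inc_gamma. replace (S k - 1)%nat with k by lia.
assert (Hint : forall b, is_RInt (fun t => t ^ k * exp (- t)) u b
                 (INR (fact k) * (erlang_tail k u - erlang_tail k b))).
{ intros b. pose proof (INR_fact_pos k).
  apply (is_RInt_ext (fun t => scal (INR (fact k)) (exp (- t) * (t ^ k / INR (fact k))))).
  { intros t _. unfold scal; simpl; unfold mult; simpl. field. lra. }
  apply (is_RInt_scal (V := R_NormedModule)), is_RInt_erlang_tail. }
apply Iint_eq_lim.
- intros b _. eexists. apply Hint.
- apply (is_lim_ext (fun b => INR (fact k) * (erlang_tail k u - erlang_tail k b))).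
  { intros b. symmetry. apply is_RInt_unique, Hint. }
  replace (Finite (INR (fact k) * erlang_tail k u))
    with (Rbar_mult (INR (fact k)) (erlang_tail k u - 0)) by (simpl; f_equal; ring).
  apply is_lim_scal_l, is_lim_minus'; [apply is_lim_const | apply is_lim_erlang_tail].
Qed.

Lemma Gamma_S k : Gamma (S k) = INR (fact k).
Proof. unfold Gamma. rewrite inc_gamma_S, erlang_tail_0. ring. Qed.

Definition erlang_pdf (k : nat) (th y : R) : R :=
  y ^ k * exp (- y / th) / (INR (fact k) * th ^ S k).

Lemma gamma_pdf_S k th y : 0 <= y -> gamma_pdf (S k) th y = erlang_pdf k th y.
Proof.
intros Hy. unfold gamma_pdf, erlang_pdf. destruct (Rle_dec 0 y) as [_ | ]; [| lra].
now rewrite Gamma_S, Nat.sub_succ, Nat.sub_0_r.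
Qed.

Lemma erlang_pdf_nonneg k th y : 0 < th -> 0 <= y -> 0 <= erlang_pdf k th y.
Proof.
intros Hth Hy. pose proof (INR_fact_pos k). pose proof (pow_lt th (S k) Hth).
unfold erlang_pdf. apply Rdiv_le_0_compat; [| nra].
apply Rmult_le_pos; [apply pow_le, Hy | left; apply exp_pos].
Qed.

Lemma erlang_pdf_scale k th y : 0 < th ->
  scal (/ th) (exp (- (/ th * y + 0)) * ((/ th * y + 0) ^ k / INR (fact k))) = erlang_pdf k th y.
Proof.
intros Hth. pose proof (INR_fact_pos k). unfold erlang_pdf, scal; simpl; unfold mult; simpl.
rewrite Rplus_0_r, Rpow_mult_distr, pow_inv. simpl pow.
replace (- (/ th * y)) with (- y / th) by (field; lra). field. split; [apply pow_nonzero |]; lra.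
Qed.

Lemma is_RInt_erlang_pdf k th a b : 0 < th ->
  is_RInt (erlang_pdf k th) a b (erlang_tail k (a / th) - erlang_tail k (b / th)).
Proof.
intros Hth. pose proof (is_RInt_erlang_tail k (/ th * a + 0) (/ th * b + 0)) as H.
apply is_RInt_comp_lin in H. rewrite !Rplus_0_r, !(Rmult_comm (/ th)) in H.
apply (is_RInt_ext _ _ _ _ _ (fun y _ => erlang_pdf_scale k th y Hth)), H.
Qed.

Lemma is_RInt_erlang_pdf_from_0 k th b : 0 < th ->
  is_RInt (erlang_pdf k th) 0 b (1 - erlang_tail k (b / th)).
Proof.
intros Hth. replace 1 with (erlang_tail k (0 / th)) by now rewrite Rdiv_0_l, erlang_tail_0.
now apply is_RInt_erlang_pdf.
Qed.

Lemma gamma_r_pos r : 0 < r -> 0 < gamma_r r.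
Proof.
intros Hr. unfold gamma_r, Rpower.
assert (0 < ln 2) by (rewrite <- ln_1; apply ln_increasing; lra).
assert (exp 0 < exp (2 * r * ln 2)) by (apply exp_increasing; nra).
rewrite exp_0 in *. lra.
Qed.

Lemma half_log2_lt_iff r z : 0 < z -> (/ 2 * log2 z < r <-> z < 1 + gamma_r r).
Proof.
intros Hz. assert (Hln2 : 0 < ln 2) by (rewrite <- ln_1; apply ln_increasing; lra).
unfold log2, gamma_r, Rpower.
replace (1 + (exp (2 * r * ln 2) - 1)) with (exp (2 * r * ln 2)) by ring.
rewrite <- (exp_ln z Hz) at 2. split; intros H.
- apply exp_increasing. apply (Rmult_lt_compat_l (2 * ln 2)) in H; [| lra].
  replace (2 * ln 2 * (/ 2 * (ln z / ln 2))) with (ln z) in H by (field; lra). lra.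
- apply exp_lt_inv in H. apply (Rmult_lt_reg_l (2 * ln 2)); [lra |].
  replace (2 * ln 2 * (/ 2 * (ln z / ln 2))) with (ln z) by (field; lra). lra.
Qed.

Lemma sr_ratio_bounds Pr Cx x : 0 < Pr -> 0 <= Cx < 1 -> 0 <= x ->
  0 <= Pr * x * Cx / (Pr * x + 1) < 1.
Proof.
intros HPr HC Hx. assert (0 <= Pr * x) by nra. split.
- apply Rdiv_le_0_compat; nra.
- apply (Rmult_lt_reg_r (Pr * x + 1)); [lra |]. unfold Rdiv.
  rewrite Rmult_assoc, Rinv_l by lra. nra.
Qed.

Lemma Psi_nonneg r c : 0 < r -> 0 <= c < 1 -> 0 <= Psi r c.
Proof.
intros Hr Hc. pose proof (gamma_r_pos r Hr). unfold Psi.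
assert (0 <= 1 - c ^ 2) by nra.
assert (H1 : 1 <= 1 + gamma_r r * (1 - c ^ 2)) by nra.
apply sqrt_le_1_alt in H1. rewrite sqrt_1 in H1. lra.
Qed.

Definition sr_threshold (Ps Pr Cx r x : R) : R :=
  (Pr * x + 1) * Psi r (Pr * x * Cx / (Pr * x + 1)) / Ps.

Lemma sr_threshold_nonneg Ps Pr Cx r x : 0 < Ps -> 0 < Pr -> 0 < r -> 0 <= Cx < 1 -> 0 <= x ->
  0 <= sr_threshold Ps Pr Cx r x.
Proof.
intros HPs HPr Hr HC Hx. pose proof (Psi_nonneg r _ Hr (sr_ratio_bounds Pr Cx x HPr HC Hx)).
assert (0 <= Pr * x) by nra.
unfold sr_threshold. apply Rdiv_le_0_compat; [apply Rmult_le_pos |]; lra.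
Qed.

(* With [a = Pr x + 1], [X = Pr x Cx] and [s = 1 + gamma (1 - (X/a)^2)], the event
   reads [(Ps y + a)^2 - X^2 < (1 + gamma) (a^2 - X^2)], i.e. [(Ps y + a)^2 < a^2 s]. *)
Lemma R_sr_lt_iff Ps Pr Cx r x y :
  0 < Ps -> 0 < Pr -> 0 < r -> 0 <= Cx < 1 -> 0 <= x -> 0 <= y ->
  (R_sr Ps Pr Cx y x < r <-> y < sr_threshold Ps Pr Cx r x).
Proof.
intros HPs HPr Hr HC Hx Hy.
pose proof (sr_ratio_bounds Pr Cx x HPr HC Hx) as Hc. pose proof (gamma_r_pos r Hr) as Hg.
unfold R_sr, sr_threshold, Psi.
set (a := Pr * x + 1) in *. set (X := Pr * x * Cx) in *. set (g := gamma_r r) in *.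
set (s := 1 + g * (1 - (X / a) ^ 2)).
assert (Ha : 0 < a) by (unfold a; nra).
assert (HXa : 0 <= X < a).
{ assert (X = X / a * a) by (field; lra). nra. }
assert (0 <= 1 - (X / a) ^ 2) by nra.
assert (Hs : 1 <= s) by (unfold s; nra).
assert (Has : a ^ 2 * s = a ^ 2 + g * (a ^ 2 - X ^ 2)) by (unfold s; field; lra).
pose proof (sqrt_sqrt s ltac:(lra)) as Hq. pose proof (sqrt_pos s) as Hq0.
assert (HPy : 0 <= Ps * y) by nra.
replace (Ps * y + Pr * x + 1) with (Ps * y + a) by (unfold a; ring).
rewrite half_log2_lt_iff by (apply Rdiv_lt_0_compat; nra).
fold g. rewrite Rlt_div_l, <- Rlt_div_r by nra.
assert (Haq : (a * sqrt s) ^ 2 = a ^ 2 * s)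
  by (replace ((a * sqrt s) ^ 2) with (a ^ 2 * (sqrt s * sqrt s)) by ring; now rewrite Hq).
assert (0 <= a * sqrt s) by nra.
split; intros H1; nra.
Qed.

Lemma conditional_outage_Iint Ps Pr Cx r k th x :
  0 < Ps -> 0 < Pr -> 0 < r -> 0 <= Cx < 1 -> 0 < th -> 0 <= x ->
  Iint (fun y => gamma_pdf (S k) th y * (if Rlt_dec (R_sr Ps Pr Cx y x) r then 1 else 0)) 0
  = 1 - erlang_tail k (sr_threshold Ps Pr Cx r x / th).
Proof.
intros HPs HPr Hr HC Hth Hx.
pose proof (sr_threshold_nonneg Ps Pr Cx r x HPs HPr Hr HC Hx) as HT.
set (T := sr_threshold Ps Pr Cx r x) in *.
set (f := fun y => gamma_pdf (S k) th y * (if Rlt_dec (R_sr Ps Pr Cx y x) r then 1 else 0)).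
assert (Hbelow : forall b, 0 <= b <= T -> is_RInt f 0 b (1 - erlang_tail k (b / th))).
{ intros b Hb.
  apply (is_RInt_ext (erlang_pdf k th)); [| now apply is_RInt_erlang_pdf_from_0].
  rewrite Rmin_left, Rmax_right by lra. intros y Hy. unfold f.
  rewrite gamma_pdf_S by lra. destruct (Rlt_dec _ _) as [Hlt | Hn]; [simpl; ring |].
  exfalso. apply Hn. apply R_sr_lt_iff; auto; fold T; lra. }
assert (Habove : forall b, T <= b -> is_RInt f T b (scal (b - T) 0)).
{ intros b Hb. apply (is_RInt_ext (fun _ => 0)); [| apply (is_RInt_const (V := R_NormedModule))].
  rewrite Rmin_left, Rmax_right by lra. intros y Hy. unfold f.
  destruct (Rlt_dec _ _) as [Hlt | Hn]; [| simpl; ring].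
  apply R_sr_lt_iff in Hlt; auto; fold T in Hlt; lra. }
apply Iint_eq_lim.
- intros b Hb. destruct (Rle_dec b T).
  + eexists. now apply Hbelow.
  + eexists. apply (is_RInt_Chasles _ _ _ _ _ _ (Hbelow T ltac:(lra)) (Habove b ltac:(lra))).
- apply (is_lim_ext_loc (fun _ => 1 - erlang_tail k (T / th))); [| apply is_lim_const].
  exists T. intros b Hb. symmetry. apply is_RInt_unique.
  replace (1 - erlang_tail k (T / th)) with (plus (1 - erlang_tail k (T / th)) (scal (b - T) 0))
    by (unfold plus, scal; simpl; unfold mult; simpl; ring).
  apply (is_RInt_Chasles _ _ _ _ _ _ (Hbelow T ltac:(lra)) (Habove b ltac:(lra))).
Qed.

Section NoOutageIntegral.

Variables (Ps Pr Cx r thsr thrr : R) (ksr krr : nat).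
Hypotheses (hPs : 0 < Ps) (hPr : 0 < Pr) (hr : 0 < r) (hC : 0 <= Cx < 1)
  (hthsr : 0 < thsr) (hthrr : 0 < thrr).

Definition no_outage_density (x : R) : R :=
  erlang_pdf krr thrr x * erlang_tail ksr (sr_threshold Ps Pr Cx r x / thsr).

Lemma no_outage_density_bounds x : 0 <= x ->
  0 <= no_outage_density x <= erlang_pdf krr thrr x.
Proof.
intros Hx. pose proof (erlang_pdf_nonneg krr thrr x hthrr Hx).
pose proof (sr_threshold_nonneg Ps Pr Cx r x hPs hPr hr hC Hx).
destruct (erlang_tail_bounds ksr (sr_threshold Ps Pr Cx r x / thsr)) as [Hlo Hhi];
  [apply Rdiv_le_0_compat; lra |].
unfold no_outage_density. split; nra.
Qed.

Lemma ex_derive_no_outage_density x : 0 <= x -> ex_derive no_outage_density x.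
Proof.
intros Hx. pose proof (sr_ratio_bounds Pr Cx x hPr hC Hx). pose proof (gamma_r_pos r hr).
assert (0 <= gamma_r r * (1 - (Pr * x * Cx / (Pr * x + 1)) ^ 2)) by (apply Rmult_le_pos; nra).
unfold no_outage_density, erlang_pdf, sr_threshold, Psi. auto_derive; repeat split.
- eexists. apply is_derive_erlang_tail.
- nra.
- change (Pr * x * Cx * / (Pr * x + 1)) with (Pr * x * Cx / (Pr * x + 1)). lra.
Qed.

Lemma ex_RInt_no_outage_density b : 0 <= b -> ex_RInt no_outage_density 0 b.
Proof.
intros Hb. apply (@ex_RInt_continuous R_CompleteNormedModule). intros x Hx.
rewrite Rmin_left in Hx by lra.
apply (@ex_derive_continuous R_AbsRing R_NormedModule), ex_derive_no_outage_density. lra.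
Qed.

Lemma no_outage_integral_converges :
  exists L : R, is_lim (fun b => RInt no_outage_density 0 b) p_infty L.
Proof.
apply (monotone_bounded_is_lim _ 0 1).
- intros u v Huv. rewrite <- (RInt_Chasles no_outage_density 0 u v).
  + assert (0 <= RInt no_outage_density u v); [| unfold plus; simpl; lra].
    apply RInt_ge_0; [lra | | intros x Hx; apply no_outage_density_bounds; lra].
    apply (ex_RInt_Chasles_2 (V := R_CompleteNormedModule) _ 0);
      [lra | apply ex_RInt_no_outage_density; lra].
  + apply ex_RInt_no_outage_density; lra.
  + apply (ex_RInt_Chasles_2 (V := R_CompleteNormedModule) _ 0);
      [lra | apply ex_RInt_no_outage_density; lra].
- intros b Hb. apply Rle_trans with (RInt (erlang_pdf krr thrr) 0 b).
  + apply RInt_le; [lra | now apply ex_RInt_no_outage_density | |].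
    * eexists. apply is_RInt_erlang_pdf_from_0, hthrr.
    * intros x Hx. apply no_outage_density_bounds. lra.
  + rewrite (is_RInt_unique _ _ _ _ (is_RInt_erlang_pdf_from_0 krr thrr b hthrr)).
    assert (0 <= b / thrr) by (apply Rdiv_le_0_compat; lra).
    pose proof (erlang_tail_bounds krr (b / thrr)). lra.
Qed.

Lemma P_sr_no_outage (L : R) :
  is_lim (fun b => RInt no_outage_density 0 b) p_infty L ->
  P_sr Ps Pr Cx r (S ksr) (S krr) thsr thrr = 1 - L.
Proof.
intros HL. unfold P_sr.
set (outage := fun x => gamma_pdf (S krr) thrr x *
  Iint (fun y => gamma_pdf (S ksr) thsr y * (if Rlt_dec (R_sr Ps Pr Cx y x) r then 1 else 0)) 0).
assert (Hint : forall b, 0 <= b ->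
  is_RInt outage 0 b ((1 - erlang_tail krr (b / thrr)) - RInt no_outage_density 0 b)).
{ intros b Hb.
  apply (is_RInt_ext (fun x => erlang_pdf krr thrr x - no_outage_density x)).
  - rewrite Rmin_left, Rmax_right by lra. intros x Hx. unfold outage, no_outage_density.
    rewrite gamma_pdf_S, conditional_outage_Iint by (auto; lra). simpl. ring.
  - apply (is_RInt_minus (V := R_NormedModule)); [apply is_RInt_erlang_pdf_from_0, hthrr |].
    apply (RInt_correct (V := R_CompleteNormedModule)), ex_RInt_no_outage_density, Hb. }
apply Iint_eq_lim.
- intros b Hb. eexists. now apply Hint.
- apply (is_lim_ext_loc (fun b => (1 - erlang_tail krr (b / thrr)) - RInt no_outage_density 0 b)).
  { exists 0. intros b Hb. symmetry. apply is_RInt_unique, Hint. lra. }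
  replace (1 - L) with ((1 - 0) - L) by ring.
  apply is_lim_minus'; [| exact HL].
  apply is_lim_minus'; [apply is_lim_const |].
  apply is_lim_p_infty_scale, is_lim_erlang_tail. exact hthrr.
Qed.

Lemma outage_formula_integrand x :
  x ^ (S krr - 1) *
    inc_gamma (S ksr) ((Pr * x + 1) / (Ps * thsr) * Psi r (Pr * x * Cx / (Pr * x + 1))) *
    exp (- x / thrr)
  = INR (fact ksr) * INR (fact krr) * thrr ^ S krr * no_outage_density x.
Proof.
pose proof (INR_fact_pos krr). pose proof (pow_lt thrr (S krr) hthrr).
rewrite inc_gamma_S, Nat.sub_succ, Nat.sub_0_r.
unfold no_outage_density, erlang_pdf, sr_threshold.
replace ((Pr * x + 1) * Psi r (Pr * x * Cx / (Pr * x + 1)) / Ps / thsr)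
  with ((Pr * x + 1) / (Ps * thsr) * Psi r (Pr * x * Cx / (Pr * x + 1))) by (field; lra).
field. lra.
Qed.

Lemma outage_formula_Iint (L : R) :
  is_lim (fun b => RInt no_outage_density 0 b) p_infty L ->
  Iint (fun x => x ^ (S krr - 1) *
          inc_gamma (S ksr) ((Pr * x + 1) / (Ps * thsr) * Psi r (Pr * x * Cx / (Pr * x + 1))) *
          exp (- x / thrr)) 0
  = INR (fact ksr) * INR (fact krr) * thrr ^ S krr * L.
Proof.
intros HL. set (C := INR (fact ksr) * INR (fact krr) * thrr ^ S krr).
assert (Hint : forall b, 0 <= b ->
  is_RInt (fun x => x ^ (S krr - 1) *
             inc_gamma (S ksr) ((Pr * x + 1) / (Ps * thsr) * Psi r (Pr * x * Cx / (Pr * x + 1))) *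
             exp (- x / thrr)) 0 b (C * RInt no_outage_density 0 b)).
{ intros b Hb. apply (is_RInt_ext (fun x => C * no_outage_density x)).
  - intros x _. symmetry. apply outage_formula_integrand.
  - apply (is_RInt_scal (V := R_NormedModule)).
    apply (RInt_correct (V := R_CompleteNormedModule)), ex_RInt_no_outage_density, Hb. }
apply Iint_eq_lim.
- intros b Hb. eexists. now apply Hint.
- apply (is_lim_ext_loc (fun b => C * RInt no_outage_density 0 b)).
  + exists 0. intros b Hb. symmetry. apply is_RInt_unique, Hint. lra.
  + now apply (is_lim_scal_l _ C _ L).
Qed.

End NoOutageIntegral.

Theorem lemma2 (Ps Pr r Cx : R) (msr mrr : nat) (pisr pirr : R)
  (hPs : 0 < Ps) (hPr : 0 < Pr) (hr : 0 < r) (hC0 : 0 <= Cx) (hC1 : Cx < 1)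
  (hmsr : (1 <= msr)%nat) (hmrr : (1 <= mrr)%nat)
  (hpisr : 0 < pisr) (hpirr : 0 < pirr) :
  let thsr := pisr / INR msr in
  let thrr := pirr / INR mrr in
  P_sr Ps Pr Cx r msr mrr thsr thrr =
  1 - / (Gamma mrr * Gamma msr * thrr ^ mrr) *
      Iint (fun x => x ^ (mrr - 1) *
              inc_gamma msr ((Pr * x + 1) / (Ps * thsr) *
                             Psi r (Pr * x * Cx / (Pr * x + 1))) *
              exp (- x / thrr)) 0.
Proof.
intros thsr thrr.
assert (hthsr : 0 < thsr) by (apply Rdiv_lt_0_compat; [lra | apply lt_0_INR; lia]).
assert (hthrr : 0 < thrr) by (apply Rdiv_lt_0_compat; [lra | apply lt_0_INR; lia]).
clearbody thsr thrr.
destruct msr as [| ksr]; [lia |]. destruct mrr as [| krr]; [lia |].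
assert (hC : 0 <= Cx < 1) by lra.
destruct (no_outage_integral_converges Ps Pr Cx r thsr thrr ksr krr hPs hPr hr hC hthsr hthrr)
  as [L HL].
erewrite P_sr_no_outage, outage_formula_Iint by eassumption. rewrite !Gamma_S.
pose proof (INR_fact_pos ksr). pose proof (INR_fact_pos krr).
pose proof (pow_lt thrr (S krr) hthrr).
field. lra.
Qed.
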